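(* Consider the energy consumption game $\mathcal{G}^{\mathrm{HP}}_\alpha$ with hourly proportional billing described in the context, with quadratic costs $C_h(x)=a_{1,h}x+a_{2,h}x^2$, for a fixed $\alpha\in[0,1]$. Then $\mathcal{G}^{\mathrm{HP}}_\alpha$ is an exact potential game with potential $$W^{\mathrm{HP}}_\alpha(\boldsymbol{\ell})=(1-\alpha)\sum_{h\in\mathcal{H}}\Big[\frac{a_{2,h}}{2}\Big((\ell^h)^2+\sum_{n\in\mathcal N}(\ell_n^h)^2\Big)+a_{1,h}\ell^h\Big]-\alpha\sum_{n\in\mathcal{N}}u_n(\boldsymbol{\ell}_n),$$ i.e. for every $n$, every $\boldsymbol{\ell}_{-n}\in\prod_{m\neq n}\mathcal{L}_m$ and every $\boldsymbol{\ell}_n,\boldsymbol{\ell}_n'\in\mathcal{L}_n$, $f_n^\alpha(\boldsymbol{\ell}_n',\boldsymbol{\ell}_{-n})-f_n^\alpha(\boldsymbol{\ell}_n,\boldsymbol{\ell}_{-n})=W^{\mathrm{HP}}_\alpha(\boldsymbol{\ell}_n',\boldsymbol{\ell}_{-n})-W^{\mathrm{HP}}_\alpha(\boldsymbol{\ell}_n,\boldsymbol{\ell}_{-n})$.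
   Context: There is a finite set of users $\mathcal{N}=\{1,\dots,N\}$ and a finite set of time periods $\mathcal{H}$. Each user $n$ chooses a load profile $\boldsymbol{\ell}_n=(\ell_n^h)_{h\in\mathcal{H}}\in\mathbb{R}^{\mathcal H}$ in the feasible set $\mathcal{L}_n=\{\boldsymbol{\ell}_n:\sum_{h}\ell_n^h=E_n,\ \underline{\ell}_n^h\le \ell_n^h\le\overline{\ell}_n^h\ \forall h\}$ with given $E_n$ and bounds; $\boldsymbol{\ell}_{-n}=(\boldsymbol{\ell}_m)_{m\ne n}$, $\ell^h=\sum_n\ell_n^h$. The cost of period $h$ is $C_h(x)=a_{1,h}x+a_{2,h}x^2$ with real coefficients. Each user has a preferred profile $\hat{\boldsymbol{\ell}}_n$, weight $\omega_n>0$ and utility $u_n(\boldsymbol{\ell}_n)=-\omega_n\sum_h(\ell_n^h-\hat\ell_n^h)^2$. The hourly proportional (HP) bill is $b_n^{\mathrm{HP}}(\boldsymbol{\ell})=\sum_h\frac{\ell_n^h}{\ell^h}C_h(\ell^h)=\sum_h\ell_n^h(a_{1,h}+a_{2,h}\ell^h)$ (the right-hand form also defining it when $\ell^h=0$). User $n$'s cost is $f_n^\alpha(\boldsymbol{\ell}_n,\boldsymbol{\ell}_{-n})=(1-\alpha)b_n^{\mathrm{HP}}(\boldsymbol{\ell})-\alpha u_n(\boldsymbol{\ell}_n)$, minimized over $\mathcal L_n$. The game $\mathcal{G}^{\mathrm{HP}}_\alpha$ has players $\mathcal N$, strategy sets $\mathcal L_n$ and costs $f_n^\alpha$. *)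

From mathcomp Require Import all_boot all_order all_algebra.
Set Implicit Arguments. Unset Strict Implicit. Unset Printing Implicit Defensive.
Import Order.TTheory GRing.Theory Num.Theory.
Local Open Scope ring_scope.

Section Game.
Variables (R : realFieldType) (N : nat) (H : finType).

(* a joint load profile: l n h = load of user n in period h *)
Definition profile := 'I_N -> H -> R.

Definition total_load (l : profile) (h : H) : R := \sum_(m < N) l m h.

Definition feasible (E : 'I_N -> R) (lo up : 'I_N -> H -> R)
  (n : 'I_N) (x : H -> R) : Prop :=
  \sum_(h : H) x h = E n /\ forall h, lo n h <= x h <= up n h.

Definition update (l : profile) (n : 'I_N) (x : H -> R) : profile :=
  fun m => if m == n then x else l m.

Definition utility (omega : 'I_N -> R) (lhat : 'I_N -> H -> R)
  (n : 'I_N) (x : H -> R) : R :=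
  - omega n * \sum_(h : H) (x h - lhat n h) ^+ 2.

Definition bill_HP (a1 a2 : H -> R) (l : profile) (n : 'I_N) : R :=
  \sum_(h : H) l n h * (a1 h + a2 h * total_load l h).

Definition cost_HP (alpha : R) (a1 a2 : H -> R) (omega : 'I_N -> R)
  (lhat : 'I_N -> H -> R) (l : profile) (n : 'I_N) : R :=
  (1 - alpha) * bill_HP a1 a2 l n - alpha * utility omega lhat n (l n).

Definition potential_HP (alpha : R) (a1 a2 : H -> R) (omega : 'I_N -> R)
  (lhat : 'I_N -> H -> R) (l : profile) : R :=
  (1 - alpha) * \sum_(h : H)
     (a2 h / 2 * (total_load l h ^+ 2 + \sum_(m < N) l m h ^+ 2)
      + a1 h * total_load l h)
  - alpha * \sum_(m < N) utility omega lhat m (l m).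
End Game.

(* Only user n's own terms of the potential move with l_n.  In period h, with s the
   others' total load and q the sum of their squared loads, the potential term
   a2/2 ((y + s)^2 + y^2 + q) + a1 (y + s) exceeds user n's bill y (a1 + a2 (y + s))
   by a2/2 (s^2 + q) + a1 s, which does not depend on y; the utility parts agree in
   the same way.  Hence W - f_n is constant in l_n, which is exactness. *)
From mathcomp Require Import all_boot all_order all_algebra.
From mathcomp Require Import ring lra.
Import Order.TTheory GRing.Theory Num.Theory.
Local Open Scope ring_scope.

Section PotentialHP.
Variables (R : realFieldType) (N : nat) (H : finType).
Implicit Types (l : profile R N H) (n : 'I_N) (y : H -> R).

Lemma update_eq l n y : update l n y n = y.
Proof. by rewrite /update eqxx. Qed.

Lemma sum_update (F : 'I_N -> (H -> R) -> R) l n y :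
  \sum_(m < N) F m (update l n y m) = F n y + \sum_(m < N | m != n) F m (l m).
Proof.
rewrite (bigD1 n) //= update_eq; congr (_ + _).
by apply: eq_bigr => m /negbTE mn; rewrite /update mn.
Qed.

Lemma total_load_update l n y h :
  total_load (update l n y) h = y h + \sum_(m < N | m != n) l m h.
Proof. exact: (sum_update (fun _ z => z h)). Qed.

Lemma period_potential_subB (a1 a2 y s q : R) :
  a2 / 2 * ((y + s) ^+ 2 + (y ^+ 2 + q)) + a1 * (y + s) - y * (a1 + a2 * (y + s))
  = a2 / 2 * (s ^+ 2 + q) + a1 * s.
Proof. by field. Qed.

Variables (alpha : R) (a1 a2 : H -> R) (omega : 'I_N -> R) (lhat : 'I_N -> H -> R).

Lemma potential_sub_cost_update l n y :
  potential_HP alpha a1 a2 omega lhat (update l n y)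
    - cost_HP alpha a1 a2 omega lhat (update l n y) n
  = (1 - alpha) * \sum_(h : H)
        (a2 h / 2 * ((\sum_(m < N | m != n) l m h) ^+ 2
                     + \sum_(m < N | m != n) l m h ^+ 2)
         + a1 h * \sum_(m < N | m != n) l m h)
    - alpha * \sum_(m < N | m != n) utility omega lhat m (l m).
Proof.
rewrite /potential_HP /cost_HP /bill_HP update_eq.
rewrite (sum_update (utility omega lhat)).
have period_sum :
    \sum_(h : H) (a2 h / 2 * (total_load (update l n y) h ^+ 2
        + \sum_(m < N) update l n y m h ^+ 2) + a1 h * total_load (update l n y) h)
    - \sum_(h : H) y h * (a1 h + a2 h * total_load (update l n y) h)
  = \sum_(h : H) (a2 h / 2 * ((\sum_(m < N | m != n) l m h) ^+ 2
        + \sum_(m < N | m != n) l m h ^+ 2) + a1 h * \sum_(m < N | m != n) l m h).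
  rewrite -sumrB; apply: eq_bigr => h _.
  rewrite total_load_update (sum_update (fun _ z => z h ^+ 2)).
  exact: period_potential_subB.
by rewrite -period_sum; ring.
Qed.

Lemma potential_HP_exact l n y y' :
  cost_HP alpha a1 a2 omega lhat (update l n y') n
    - cost_HP alpha a1 a2 omega lhat (update l n y) n
  = potential_HP alpha a1 a2 omega lhat (update l n y')
    - potential_HP alpha a1 a2 omega lhat (update l n y).
Proof.
have := potential_sub_cost_update l n y'; have := potential_sub_cost_update l n y.
lra.
Qed.

End PotentialHP.

Theorem theorem2 (R : realFieldType) (N : nat) (H : finType)
  (a1 a2 : H -> R) (E : 'I_N -> R) (lo up : 'I_N -> H -> R)
  (omega : 'I_N -> R) (lhat : 'I_N -> H -> R) (alpha : R) :
  (forall m, 0 < omega m) ->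
  0 <= alpha <= 1 ->
  forall (n : 'I_N) (l : profile R N H),
  (forall m, m != n -> feasible E lo up m (l m)) ->
  forall x x' : H -> R,
  feasible E lo up n x -> feasible E lo up n x' ->
  cost_HP alpha a1 a2 omega lhat (update l n x') n
    - cost_HP alpha a1 a2 omega lhat (update l n x) n
  = potential_HP alpha a1 a2 omega lhat (update l n x')
    - potential_HP alpha a1 a2 omega lhat (update l n x).
Proof.
by move=> _ _ n l _ x x' _ _; apply: potential_HP_exact.
Qed.
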